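(* Let $n\ge2$, let $g^{ij}=\delta^{i,n+1-j}$ be the anti-diagonal constant contravariant metric on $\mathbb R^n$, and let $S_0=\sum_{i=0}^{n-2}\xi_i\mu^{(n;i)}$ with constants $\xi_i$ and $\xi_0\neq0$. Then: (1) if $n\not\equiv1\pmod 3$, there exists an orthogonal transformation (a change of coordinates preserving $g$) which brings $S_0$ to $\mu^{(n;0)}$; (2) if $n\equiv1\pmod3$ and $n\neq4$, there exists an orthogonal transformation which brings $S_0$ to $\mu^{(n;0)}+\kappa\,\mu^{(n;\frac{n-1}{3})}$ for some constant $\kappa$.
   Context: For integers $n\ge1$, $k\ge0$ the symmetric bivector $\mu^{(n;k)}$ has components $\mu^{(n;k)ij}=[3(i+j)-2(n+2-k)]\,u^{i+j-1+k}$, $i,j=1,\dots,n$, with the convention $u^\beta\equiv0$ for $\beta>n$. Bivectors are transformed by coordinate changes in the usual tensorial way. *)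

From HB Require Import structures.
From mathcomp Require Import all_boot all_order all_algebra.
From mathcomp Require Import reals.
Set Implicit Arguments. Unset Strict Implicit. Unset Printing Implicit Defensive.
Import Order.TTheory GRing.Theory Num.Theory.
Local Open Scope ring_scope.

(* Coordinates on R^n are column vectors u : 'cV_n; indices are 0-based,
   so paper index i (1..n) corresponds to ordinal i-1. *)

(* u^beta (0-based beta), with u^beta = 0 when beta is out of range. *)
Definition ucomp (R : nzRingType) (n : nat) (u : 'cV[R]_n) (b : nat) : R :=
  if @insub _ (fun x => x < n)%N 'I_n b is Some l then u l ord0 else 0.

(* mu^{(n;k) ij} = [3(i+j) - 2(n+2-k)] u^{i+j-1+k}  (1-based);
   with i = i0+1, j = j0+1 the 0-based index of u is i0+j0+k. *)
Definition mu (R : nzRingType) (n k : nat) (u : 'cV[R]_n) : 'M[R]_n :=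
  \matrix_(i < n, j < n)
    (((3 * ((i : nat) + j + 2))%N%:R - 2 * (n%:R + 2 - k%:R))
       * ucomp u (i + j + k)%N).

Definition gmetric (R : nzRingType) (n : nat) : 'M[R]_n :=
  \matrix_(i < n, j < n) ((i + j)%N == n.-1)%:R.

Definition g_orthogonal (R : nzRingType) (n : nat) (A : 'M[R]_n) : Prop :=
  A *m gmetric R n *m A^T = gmetric R n.

(* the bivector S (a function of u) is brought to T by u~ = A u:
   A^a_i A^b_j S^{ij}(u) = T^{ab}(A u) for all u *)
Definition brings (R : nzRingType) (n : nat) (A : 'M[R]_n)
  (S T : 'cV[R]_n -> 'M[R]_n) : Prop :=
  forall u : 'cV[R]_n, A *m S u *m A^T = T (A *m u).
Arguments mu {R} n k u.

From HB Require Import structures.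
From mathcomp Require Import all_boot all_order all_algebra.
From mathcomp Require Import reals ring zify.
Set Implicit Arguments. Unset Strict Implicit. Unset Printing Implicit Defensive.
Import Order.TTheory GRing.Theory Num.Theory.
Local Open Scope ring_scope.

(* For m > 0 let X_m be the nilpotent matrix with (X_m)_{i,i+m} = 2i+1+m-n
   (0-based indices). It is skew for g, and it shifts the family mu^(n;k):
     X_m mu^(n;k)(v) + mu^(n;k)(v) X_m^T - mu^(n;k)(X_m v) = (3m+1-n-2k) mu^(n;k+m)(v).
   Hence the g-orthogonal matrices exp(t X_m) map a combination sum_k c_k mu^(n;k)
   to another such combination, leaving c_k unchanged for k < m and replacing c_m
   by c_m + t (3m+1-n) c_0. Choosing t for m = 1, 2, ... kills every c_m with
   3m+1 <> n, so at most the coefficient of mu^(n;(n-1)/3) survives, and a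
   diagonal g-orthogonal scaling makes c_0 = 1. As X_m is nilpotent, exp(t X_m)
   is a matrix polynomial in t, and its action on mu^(n;k) is computed by
   uniqueness of polynomial solutions of F' = X F + F X^T. *)

Section ShiftMatrix.
Variables (R : comNzRingType) (n : nat).

Definition mu_coef (k s : nat) : R := (3 * (s + 2))%N%:R - 2 * (n%:R + 2 - k%:R).

Definition shift_weight (m a : nat) : R := (2 * a + 1 + m)%N%:R - n%:R.

Definition shift_mx (m : nat) : 'M[R]_n :=
  \matrix_(i, j) (((j : nat) == i + m)%N%:R * shift_weight m i).

Definition shift_gain (m k : nat) : R := (3 * m + 1)%N%:R - n%:R - (2 * k)%N%:R.

Lemma muE k (u : 'cV[R]_n) i j :
  mu n k u i j = mu_coef k (i + j) * ucomp u (i + j + k).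
Proof. by rewrite mxE. Qed.

Lemma ucompE (u : 'cV[R]_n) b (lt_bn : (b < n)%N) : ucomp u b = u (Ordinal lt_bn) ord0.
Proof. by rewrite /ucomp insubT. Qed.

Lemma ucomp_out (u : 'cV[R]_n) b : (n <= b)%N -> ucomp u b = 0.
Proof. by move=> le_nb; rewrite /ucomp insubF // ltnNge le_nb. Qed.

Lemma sum_delta_ord (f : 'I_n -> R) K (lt_Kn : (K < n)%N) :
  \sum_(l < n) ((l : nat) == K)%:R * f l = f (Ordinal lt_Kn).
Proof.
rewrite (bigD1 (Ordinal lt_Kn)) //= eqxx mul1r big1 ?addr0 // => l.
by rewrite -(inj_eq val_inj) /= => /negbTE->; rewrite mul0r.
Qed.

Lemma sum_delta_ord_out (f : 'I_n -> R) K : (n <= K)%N ->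
  \sum_(l < n) ((l : nat) == K)%:R * f l = 0.
Proof.
move=> le_nK; rewrite big1 // => l _.
by rewrite (_ : (l : nat) == K = false) ?mul0r //; apply/negbTE; move: (ltn_ord l); lia.
Qed.

Lemma mu0 k : mu n k (0 : 'cV[R]_n) = 0.
Proof.
apply/matrixP => i j; rewrite muE mxE /ucomp.
by case: insubP => [l _ _|_]; rewrite ?mxE mulr0.
Qed.

Lemma ucomp_shift_mx m (v : 'cV[R]_n) b :
  ucomp (shift_mx m *m v) b = shift_weight m b * ucomp v (b + m).
Proof.
have [lt_bn|le_nb] := ltnP b n; last by rewrite !ucomp_out ?mulr0 //; lia.
rewrite ucompE mxE; under eq_bigr => l _ do rewrite mxE -mulrA.
have [lt_n|le_n] := ltnP (b + m) n; last by rewrite sum_delta_ord_out // ucomp_out ?mulr0.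
by rewrite (sum_delta_ord _ lt_n) (ucompE _ lt_n) mulrC.
Qed.

Lemma shift_mx_mulmx_mu m k v (i j : 'I_n) :
  (shift_mx m *m mu n k v) i j =
  shift_weight m i * mu_coef k (i + m + j) * ucomp v (i + j + k + m).
Proof.
rewrite mxE; under eq_bigr => l _ do rewrite mxE -mulrA.
have [lt_n|le_n] := ltnP (i + m) n.
  rewrite (sum_delta_ord _ lt_n) muE /= -mulrA.
  by rewrite (_ : (i + m + j + k = i + j + k + m)%N) //; lia.
by rewrite sum_delta_ord_out // ucomp_out ?mulr0 //; lia.
Qed.

Lemma mu_mulmx_tr_shift_mx m k v (i j : 'I_n) :
  (mu n k v *m (shift_mx m)^T) i j =
  shift_weight m j * mu_coef k (i + j + m) * ucomp v (i + j + k + m).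
Proof.
rewrite mxE; under eq_bigr => l _ do rewrite [_^T _ _]mxE [shift_mx _ _ _]mxE mulrCA.
have [lt_n|le_n] := ltnP (j + m) n.
  rewrite (sum_delta_ord _ lt_n) muE /= mulrC mulrA.
  by rewrite (_ : (i + (j + m) + k = i + j + k + m)%N) ?addnA //; lia.
by rewrite sum_delta_ord_out // ucomp_out ?mulr0 //; lia.
Qed.

Lemma shift_mx_mu m k v :
  shift_mx m *m mu n k v + mu n k v *m (shift_mx m)^T =
  shift_gain m k *: mu n (k + m) v + mu n k (shift_mx m *m v).
Proof.
apply/matrixP => i j; rewrite [LHS]mxE [RHS]mxE shift_mx_mulmx_mu mu_mulmx_tr_shift_mx.
rewrite [X in _ = X + _]mxE !muE ucomp_shift_mx -!mulrA !addnA.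
by rewrite /shift_weight /mu_coef /shift_gain !natrD; ring.
Qed.

Lemma shift_mx_skew m :
  shift_mx m *m gmetric R n + gmetric R n *m (shift_mx m)^T = 0.
Proof.
apply/matrixP => i j; rewrite !mxE.
under eq_bigr => l _ do rewrite [shift_mx _ _ _]mxE -mulrA.
under [X in _ + X]eq_bigr => l _ do rewrite [_^T _ _]mxE [shift_mx _ _ _]mxE mulrCA.
have [lt_im|le_im] := ltnP (i + m) n; last first.
  rewrite sum_delta_ord_out // add0r.
  have [lt_jm|le_jm] := ltnP (j + m) n; last by rewrite sum_delta_ord_out.
  rewrite (sum_delta_ord _ lt_jm) mxE /=.
  by rewrite (_ : (i + (j + m))%N == n.-1 = false) ?mul0r ?mulr0 //; apply/negbTE; lia.
rewrite (sum_delta_ord _ lt_im) mxE /=.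
have [lt_jm|le_jm] := ltnP (j + m) n; last first.
  rewrite sum_delta_ord_out // addr0.
  by rewrite (_ : (i + m + j)%N == n.-1 = false) ?mul0r ?mulr0 //; apply/negbTE; lia.
rewrite (sum_delta_ord _ lt_jm) mxE /= (_ : (i + (j + m) = i + m + j)%N); last by lia.
have [anti|] := eqVneq (i + m + j)%N n.-1; last by rewrite mul0r mulr0 addr0.
rewrite mul1r mulr1 /shift_weight addrACA -opprD -!natrD.
by rewrite (_ : (2 * i + 1 + m + (2 * j + 1 + m) = n + n)%N) ?subrr //; lia.
Qed.

Lemma mu_eq0 k (u : 'cV[R]_n) : (n.-1 <= k)%N -> mu n k u = 0.
Proof.
move=> le_k; apply/matrixP => i j; rewrite muE mxE.
have [lt_n|le_n] := ltnP (i + j + k) n; last by rewrite ucomp_out ?mulr0.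
(* only the corner entry survives, and its coefficient 6 - 2 (n + 2 - (n - 1)) vanishes *)
have n_gt0 : (0 < n)%N by lia.
have [-> -> ->] : [/\ i = 0 :> nat, j = 0 :> nat & k = n.-1] by split; lia.
rewrite /mu_coef; have -> : n%:R = n.-1%:R + 1 :> R by rewrite natr1 prednK.
by ring.
Qed.

End ShiftMatrix.

Lemma strict_upper_mx_expr (R : nzRingType) p (M : 'M[R]_p) :
  (forall i j : 'I_p, (j <= i)%N -> M i j = 0) ->
  forall e (i j : 'I_p), (j < i + e)%N -> (M ^+ e) i j = 0.
Proof.
move=> M_upper; elim=> [|e IH] i j lt_j.
  by rewrite expr0 mxE; case: eqP => // eq_ij; move: lt_j; rewrite eq_ij addn0 ltnn.
rewrite exprSr mxE big1 // => l _.
have [lt_l|le_l] := ltnP l (i + e); first by rewrite IH ?mul0r.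
by rewrite M_upper ?mulr0 //; lia.
Qed.

Lemma shift_mx_nilpotent (R : comNzRingType) n m : (0 < m)%N -> shift_mx R n m ^+ n = 0.
Proof.
move=> m_gt0; apply/matrixP => i j; rewrite [RHS]mxE.
apply: strict_upper_mx_expr => [i' j' le_ji|]; last by move: (ltn_ord j); lia.
by rewrite mxE (_ : ((j' : nat) == i' + m)%N = false) ?mul0r //; apply/negbTE; lia.
Qed.

Section MapMorphism.
Variables (R S : comNzRingType) (f : {rmorphism R -> S}) (n : nat).

Lemma map_ucomp (v : 'cV[R]_n) b : f (ucomp v b) = ucomp (map_mx f v) b.
Proof. by rewrite /ucomp; case: insubP => [l _ _|_]; rewrite ?mxE ?rmorph0. Qed.

Lemma map_mu_coef k s : f (mu_coef R n k s) = mu_coef S n k s.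
Proof. by rewrite /mu_coef !(rmorph_nat, rmorphB, rmorphD, rmorphM). Qed.

Lemma map_mu k (v : 'cV[R]_n) : map_mx f (mu n k v) = mu n k (map_mx f v).
Proof. by apply/matrixP => i j; rewrite mxE !muE rmorphM map_ucomp map_mu_coef. Qed.

Lemma map_shift_mx m : map_mx f (shift_mx R n m) = shift_mx S n m.
Proof. by apply/matrixP => i j; rewrite !mxE !(rmorph_nat, rmorphB, rmorphM). Qed.

Lemma map_shift_gain m k : f (shift_gain R n m k) = shift_gain S n m k.
Proof. by rewrite !(rmorph_nat, rmorphB). Qed.

Lemma map_gmetric : map_mx f (gmetric R n) = gmetric S n.
Proof. by apply/matrixP => i j; rewrite !mxE rmorph_nat. Qed.

End MapMorphism.

Local Notation "A ^D" := (map_mx deriv A) (format "A ^D").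

Section MatrixDerivative.
Variable R : comNzRingType.

Lemma deriv_mxM p q r (A : 'M[{poly R}]_(p, q)) (B : 'M_(q, r)) :
  (A *m B)^D = A^D *m B + A *m B^D.
Proof.
apply/matrixP => i j; rewrite !mxE raddf_sum -big_split /=.
by apply: eq_bigr => l _; rewrite derivM !mxE.
Qed.

Lemma deriv_mxZ p q c (A : 'M[{poly R}]_(p, q)) : (c *: A)^D = c^`() *: A + c *: A^D.
Proof. by apply/matrixP => i j; rewrite !mxE derivM. Qed.

Lemma deriv_mx_polyC p q (A : 'M[R]_(p, q)) : (map_mx polyC A)^D = 0.
Proof. by apply/matrixP => i j; rewrite !mxE derivC. Qed.

Lemma deriv_mu n k (v : 'cV[{poly R}]_n) : (mu n k v)^D = mu n k v^D.
Proof.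
apply/matrixP => i j; rewrite mxE !muE -(map_mu_coef polyC) derivM derivC mul0r add0r.
by rewrite /ucomp; case: insubP => [l _ _|_]; rewrite ?mxE ?deriv0.
Qed.

End MatrixDerivative.

Lemma poly_mx_ode_eq0 (R : numDomainType) p q (A : 'M[R]_p) (B : 'M[R]_q)
    (F : 'M[{poly R}]_(p, q)) :
  F^D = map_mx polyC A *m F + F *m (map_mx polyC B)^T ->
  map_mx (horner_eval 0) F = 0 -> F = 0.
Proof.
move=> ode F0; suff coefF : forall k i j, (F i j)`_k = 0.
  by apply/matrixP => i j; apply/polyP => k; rewrite coefF !mxE coef0.
elim=> [|k IH] i j.
  by move/matrixP/(_ i j): F0; rewrite !mxE horner_evalE horner_coef0.
have /eqP := congr1 (fun M : 'M[{poly R}]_(p, q) => (M i j)`_k) ode.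
rewrite !mxE coef_deriv coefD !coef_sum !big1 ?addr0 => [|l _|l _]; rewrite ?mxE.
- by rewrite mulrn_eq0 => /eqP.
- by rewrite mulrC coefCM IH mulr0.
- by rewrite coefCM IH mulr0.
Qed.

Lemma map_mx_horner_evalC (R : comNzRingType) p q t (A : 'M[R]_(p, q)) :
  map_mx (horner_eval t) (map_mx polyC A) = A.
Proof. by rewrite -map_mx_comp map_mx_id // => c; rewrite /= horner_evalE hornerC. Qed.

Section TruncatedExponential.
Variables (R : numFieldType) (n : nat).

Definition expmx_poly (X : 'M[R]_n) : 'M[{poly R}]_n :=
  \matrix_(i, j) \poly_(a < n) ((a`!%:R)^-1 * (X ^+ a) i j).

Lemma inv_factS a : (a.+1`!%:R)^-1 *+ a.+1 = (a`!%:R)^-1 :> R.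
Proof.
rewrite factS natrM -[_ *+ a.+1]mulr_natr invfM mulrAC mulVf ?mul1r //.
by rewrite pnatr_eq0.
Qed.

Lemma deriv_expmx_poly X : X ^+ n = 0 ->
  (expmx_poly X)^D = map_mx polyC X *m expmx_poly X.
Proof.
move=> Xn0; apply/matrixP => i j; rewrite !mxE; apply/polyP => a.
rewrite coef_deriv coef_poly coef_sum.
under eq_bigr => l _ do rewrite !mxE coefCM coef_poly.
have [lt_an|le_na] := ltnP a n; last first.
  by rewrite ltnNge (leqW le_na) /= mul0rn big1 // => l _; rewrite mulr0.
under eq_bigr => l _ do rewrite mulrCA.
rewrite -mulr_sumr.
have -> : \sum_l X i l * (X ^+ a) l j = (X ^+ a.+1) i j by rewrite exprS mxE.
have [lt_a1n|] := ltnP a.+1 n; first by rewrite -mulrnAl inv_factS.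
by move=> le_na1; rewrite (_ : a.+1 = n) ?Xn0 ?mxE ?mulr0 ?mul0rn //; lia.
Qed.

Lemma expmx_poly_at0 X : (0 < n)%N -> map_mx (horner_eval 0) (expmx_poly X) = 1%:M.
Proof.
move=> n_gt0; apply/matrixP => i j.
by rewrite !mxE horner_evalE horner_coef0 coef_poly n_gt0 expr0 invr1 mul1r mxE.
Qed.

End TruncatedExponential.

Section ShiftFlow.
Variables (R : numFieldType) (n m : nat).
Hypotheses (m_gt0 : (0 < m)%N) (n_gt0 : (0 < n)%N).
Local Notation P := {poly R}.
Local Notation X := (shift_mx R n m).
Local Notation XP := (map_mx polyC (shift_mx R n m)).
Local Notation E := (expmx_poly (shift_mx R n m)).

Definition flow_coef k j : R :=
  (j`!%:R)^-1 * \prod_(r < j) shift_gain R n m (k + r * m).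

Definition mu_flow k (U : 'cV[P]_n) : 'M[P]_n :=
  \sum_(j < n.+1) ((flow_coef k j)%:P * 'X^j) *: mu n (k + j * m) (E *m U).

Lemma flow_coef0 k : flow_coef k 0 = 1.
Proof. by rewrite /flow_coef big_ord0 mulr1 fact0 invr1. Qed.

Lemma flow_coef1 k : flow_coef k 1 = shift_gain R n m k.
Proof. by rewrite /flow_coef big_ord1 (_ : 1`! = 1)%N // invr1 mul1r mul0n addn0. Qed.

Lemma flow_coefS k j : flow_coef k j.+1 *+ j.+1 = flow_coef k j * shift_gain R n m (k + j * m).
Proof. by rewrite /flow_coef big_ord_recr -mulrnAl inv_factS mulrA. Qed.

Lemma deriv_expmx_shift : E^D = XP *m E.
Proof. exact/deriv_expmx_poly/shift_mx_nilpotent. Qed.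

Lemma shift_mx_mu_poly k (v : 'cV[P]_n) :
  XP *m mu n k v + mu n k v *m XP^T =
  (shift_gain R n m k)%:P *: mu n (k + m) v + mu n k (XP *m v).
Proof. by rewrite map_shift_mx (map_shift_gain polyC) shift_mx_mu. Qed.

Lemma deriv_mu_flow k u : let U := map_mx polyC u in
  (mu_flow k U)^D = XP *m mu_flow k U + mu_flow k U *m XP^T.
Proof.
move=> U; set V := E *m U.
have dV : V^D = XP *m V.
  by rewrite /V deriv_mxM deriv_mx_polyC mulmx0 addr0 deriv_expmx_shift mulmxA.
rewrite /mu_flow map_mx_sum mulmx_sumr mulmx_suml -big_split /=.
under eq_bigr => j _ do rewrite deriv_mxZ deriv_mu dV.
under [in RHS]eq_bigr => j _ do
  rewrite -scalemxAr -scalemxAl -scalerDr shift_mx_mu_poly scalerDr scalerA.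
rewrite !big_split /=; congr (_ + _).
rewrite big_ord_recl big_ord_recr /= expr0 mulr1 derivC scale0r add0r.
(* the top term j = n carries mu^(n; k + n m) = 0 *)
rewrite mu_eq0 ?scaler0 ?addr0; last by rewrite /=; nia.
apply: eq_bigr => j _; rewrite (_ : bump 0 j = j.+1) // derivM derivC mul0r add0r.
rewrite derivXn /= mulSnr addnA; congr (_ *: _).
by rewrite mulrnAr -mulrnAl -polyCMn mulrAC -polyCM flow_coefS.
Qed.

Lemma mu_flow_at0 k u : map_mx (horner_eval 0) (mu_flow k (map_mx polyC u)) = mu n k u.
Proof.
rewrite /mu_flow map_mx_sum big_ord_recl big1 ?addr0 => [|j _].
  rewrite map_mxZ map_mu map_mxM expmx_poly_at0 // map_mx_horner_evalC mul1mx /=.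
  by rewrite horner_evalE hornerCM hornerXn expr0 mulr1 flow_coef0 scale1r addn0.
by rewrite map_mxZ /= horner_evalE hornerCM hornerXn expr0n mulr0 scale0r.
Qed.

Lemma conj_mu_flow k u : let U := map_mx polyC u in
  E *m mu n k U *m E^T = mu_flow k U.
Proof.
move=> U; apply/eqP; rewrite -subr_eq0; apply/eqP.
apply: (@poly_mx_ode_eq0 _ _ _ X X).
  rewrite map_mxB deriv_mu_flow !deriv_mxM -map_trmx deriv_expmx_shift deriv_mu.
  rewrite deriv_mx_polyC mu0 mulmx0 addr0 trmx_mul mulmxBr mulmxBl !mulmxA.
  by rewrite opprD !addrA; congr (_ - _); rewrite addrAC.
rewrite map_mxB !map_mxM -map_trmx expmx_poly_at0 // map_mu map_mx_horner_evalC.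
by rewrite mu_flow_at0 mul1mx trmx1 mulmx1 subrr.
Qed.

Lemma expmx_shift_orthogonal : E *m gmetric P n *m E^T = gmetric P n.
Proof.
apply/eqP; rewrite -subr_eq0; apply/eqP.
have gC : gmetric P n = map_mx polyC (gmetric R n) by rewrite map_gmetric.
apply: (@poly_mx_ode_eq0 _ _ _ X X).
  rewrite map_mxB !deriv_mxM -map_trmx deriv_expmx_shift gC deriv_mx_polyC.
  rewrite mulmx0 addr0 trmx_mul subr0 -gC mulmxBr mulmxBl !mulmxA.
  have := shift_mx_skew P n m; rewrite -(map_shift_mx polyC) => skew.
  by rewrite addrACA -opprD skew oppr0 addr0.
rewrite map_mxB !map_mxM -map_trmx expmx_poly_at0 // gC map_mx_horner_evalC.
by rewrite mul1mx trmx1 mulmx1 subrr.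
Qed.

Definition shift_flow (t : R) : 'M[R]_n := map_mx (horner_eval t) E.

Lemma shift_flow_orthogonal t : g_orthogonal (shift_flow t).
Proof.
rewrite /g_orthogonal -(map_gmetric (horner_eval t)) map_trmx -!map_mxM.
by rewrite expmx_shift_orthogonal.
Qed.

Lemma shift_flow_brings_mu t k : brings (shift_flow t) (mu n k)
  (fun v => \sum_(j < n.+1) (flow_coef k j * t ^+ j) *: mu n (k + j * m) v).
Proof.
move=> u /=; have := congr1 (map_mx (horner_eval t)) (conj_mu_flow k u).
rewrite !map_mxM -map_trmx map_mu map_mx_horner_evalC => ->.
rewrite /mu_flow map_mx_sum; apply: eq_bigr => j _.
by rewrite map_mxZ map_mu map_mxM map_mx_horner_evalC /= horner_evalE hornerCM hornerXn.
Qed.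

End ShiftFlow.

Lemma sum_delta_nat (V : nmodType) N K (f : nat -> V) :
  \sum_(0 <= l < N) f l *+ (l == K) = if (K < N)%N then f K else 0.
Proof.
elim: N => [|N IH]; first by rewrite big_geq.
rewrite big_nat_recr //= IH ltnS.
by case: ltngtP => [||->]; rewrite ?ltnn ?leqnn ?eqxx ?mulr0n ?mulr1n ?addr0 ?add0r.
Qed.

Section MuCombination.
Variables (R : numFieldType) (n : nat).

Definition mu_comb (c : nat -> R) (v : 'cV[R]_n) : 'M[R]_n :=
  \sum_(0 <= k < n) c k *: mu n k v.

Lemma sum_mu_delta K (v : 'cV[R]_n) : \sum_(0 <= l < n) mu n l v *+ (l == K) = mu n K v.
Proof.
rewrite sum_delta_nat; case: ltnP => // le_nK.
by rewrite mu_eq0 //; apply: leq_trans le_nK; apply: leq_pred.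
Qed.

Lemma mu_comb_predn c (v : 'cV[R]_n) :
  \sum_(0 <= k < n.-1) c k *: mu n k v = mu_comb c v.
Proof.
have [n0|n_gt0] := posnP n; first by rewrite /mu_comb !big_geq ?n0.
have range_n F : \sum_(0 <= k < n) F k = \sum_(0 <= k < n.-1.+1) F k :> 'M[R]_n.
  by rewrite prednK.
by rewrite /mu_comb range_n big_nat_recr //= mu_eq0 // scaler0 addr0.
Qed.

Definition flow_comb m t (c : nat -> R) K : R :=
  \sum_(0 <= k < n) \sum_(0 <= j < n.+1)
    (c k * (flow_coef R n m k j * t ^+ j)) *+ (K == k + j * m)%N.

Lemma shift_flow_brings_comb m t c : (0 < m)%N -> (0 < n)%N ->
  brings (shift_flow n m t) (mu_comb c) (mu_comb (flow_comb m t c)).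
Proof.
move=> m_gt0 n_gt0 u; rewrite /mu_comb /flow_comb mulmx_sumr mulmx_suml.
under eq_bigr => k _ do rewrite -scalemxAr -scalemxAl shift_flow_brings_mu //.
under [RHS]eq_bigr => K _ do rewrite scaler_suml.
rewrite exchange_big /=; apply: eq_bigr => k _.
under [RHS]eq_bigr => K _ do rewrite scaler_suml.
rewrite exchange_big /= scaler_sumr big_mkord; apply: eq_bigr => j _.
under eq_bigr => K _ do rewrite -scalerMnl scalerMnr.
by rewrite -scaler_sumr sum_mu_delta scalerA.
Qed.

Lemma flow_comb_lt m t c K : (K < m)%N -> (K < n)%N -> flow_comb m t c K = c K.
Proof.
move=> lt_Km lt_Kn; transitivity (\sum_(0 <= k < n) c k *+ (k == K)).
  apply: eq_bigr => k _; rewrite big_ltn // big_nat big1 => [|j /andP [j_gt0 _]]; last first.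
    by rewrite (_ : (K == _) = false) ?mulr0n //; apply/negbTE; nia.
  by rewrite flow_coef0 expr0 !mulr1 mul0n addn0 addr0 eq_sym.
by rewrite sum_delta_nat lt_Kn.
Qed.

Lemma flow_comb_shift m t c : (0 < m)%N -> (m < n)%N ->
  flow_comb m t c m = c m + c 0%N * (shift_gain R n m 0 * t).
Proof.
move=> m_gt0 lt_mn.
transitivity (\sum_(0 <= k < n)
  (c k *+ (k == m) + (c k * (shift_gain R n m k * t)) *+ (k == 0%N))).
  apply: eq_bigr => k _; rewrite big_ltn // big_ltn; last by lia.
  rewrite big_nat big1 => [|j /andP [j_gt1 _]]; last first.
    by rewrite (_ : (m == _) = false) ?mulr0n //; apply/negbTE; nia.
  rewrite flow_coef0 flow_coef1 expr0 expr1 !mulr1 mul0n addn0 mul1n addr0 eq_sym.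
  by have -> : (m == k + m) = (k == 0%N) by rewrite -{1}(add0n m) eqn_add2r eq_sym.
by rewrite big_split /= !sum_delta_nat lt_mn (ltn_trans m_gt0 lt_mn).
Qed.

End MuCombination.

Arguments mu_comb {R} n c v.

Section Transformations.
Variables (R : comNzRingType) (n : nat).
Implicit Types (A B : 'M[R]_n) (S T U : 'cV[R]_n -> 'M[R]_n).

Lemma g_orthogonal1 : g_orthogonal (1%:M : 'M[R]_n).
Proof. by rewrite /g_orthogonal trmx1 mul1mx mulmx1. Qed.

Lemma g_orthogonal_mul A B : g_orthogonal A -> g_orthogonal B -> g_orthogonal (B *m A).
Proof.
rewrite /g_orthogonal => oA oB.
suff -> : B *m A *m gmetric R n *m (B *m A)^T = B *m (A *m gmetric R n *m A^T) *m B^T.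
  by rewrite oA.
by rewrite trmx_mul !mulmxA.
Qed.

Lemma brings1 S : brings (1%:M : 'M[R]_n) S S.
Proof. by move=> u; rewrite trmx1 mul1mx mulmx1 mul1mx. Qed.

Lemma brings_mul A B S T U : brings A S T -> brings B T U -> brings (B *m A) S U.
Proof. by move=> bA bB u; rewrite -[B *m A *m u]mulmxA -bB -bA trmx_mul !mulmxA. Qed.

End Transformations.

Section Reduction.
Variables (R : numFieldType) (n : nat).

Definition reduced_upto M (c : nat -> R) :=
  c 0%N = 1 /\ forall K, (0 < K < M)%N -> (3 * K + 1 != n)%N -> c K = 0.

Lemma reduce_mu_comb M c : (M <= n)%N -> c 0%N = 1 ->
  exists A c', [/\ g_orthogonal A, brings A (mu_comb n c) (mu_comb n c') & reduced_upto M c'].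
Proof.
move=> + c0; elim: M => [_|M IH le_Mn].
  by exists 1%:M, c; split; [exact: g_orthogonal1 | exact: brings1 | split=> // K; lia].
have [A [c' [oA bA [c'0 c'K]]]] := IH (ltnW le_Mn).
have [M0|M_gt0] := posnP M; first by exists A, c'; split=> //; split=> // K; lia.
have n_gt0 : (0 < n)%N by lia.
pose g := shift_gain R n M 0.
have g_neq0 : (3 * M + 1 != n)%N -> g != 0.
  by rewrite /g /shift_gain muln0 subr0 subr_eq0 eqr_nat.
pose t := if (3 * M + 1 != n)%N then - c' M / g else 0.
exists (shift_flow n M t *m A), (flow_comb n M t c'); split.
- exact/g_orthogonal_mul/shift_flow_orthogonal.
- exact/(brings_mul bA)/shift_flow_brings_comb.
split=> [|K /andP [K_gt0 lt_KM1]]; first by rewrite flow_comb_lt.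
have [lt_KM|lt_MK|-> M3] := ltngtP K M.
- by move=> K3; rewrite flow_comb_lt ?c'K ?K_gt0 ?lt_KM //; lia.
- by lia.
by rewrite flow_comb_shift // c'0 mul1r /t M3 mulrC divfK ?addrN ?g_neq0.
Qed.

End Reduction.

Section DiagonalScaling.
Variables (R : numFieldType) (n : nat).

Definition diag_scale (nu lam : R) : 'M[R]_n := diag_mx (\row_(a < n) (nu * lam ^+ a)).

Lemma ucomp_diag_scale nu lam (u : 'cV[R]_n) b :
  ucomp (diag_scale nu lam *m u) b = nu * lam ^+ b * ucomp u b.
Proof.
have [lt_bn|le_nb] := ltnP b n; last by rewrite !ucomp_out ?mulr0.
by rewrite !(ucompE _ lt_bn) mul_diag_mx !mxE.
Qed.

Lemma diag_scale_orthogonal nu lam :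
  nu ^+ 2 * lam ^+ n.-1 = 1 -> g_orthogonal (diag_scale nu lam).
Proof.
move=> nu_lam; rewrite /g_orthogonal tr_diag_mx mul_diag_mx mul_mx_diag.
apply/matrixP => i j; rewrite !mxE.
have [anti|] := eqVneq (i + j)%N n.-1; last by rewrite mulr0 mul0r.
by rewrite mulr1 mulrACA -expr2 -exprD anti nu_lam.
Qed.

Lemma diag_scale_mu nu lam k (u : 'cV[R]_n) : lam != 0 ->
  diag_scale nu lam *m mu n k u *m (diag_scale nu lam)^T =
  (nu / lam ^+ k) *: mu n k (diag_scale nu lam *m u).
Proof.
move=> lam_neq0; rewrite tr_diag_mx mul_diag_mx mul_mx_diag.
apply/matrixP => i j; rewrite !mxE ucomp_diag_scale !exprD.
have lamk_neq0 : lam ^+ k != 0 by exact: expf_neq0.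
by field.
Qed.

Lemma diag_scale_brings nu lam c : lam != 0 ->
  brings (diag_scale nu lam) (mu_comb n c) (mu_comb n (fun k => c k * nu / lam ^+ k)).
Proof.
move=> lam_neq0 u; rewrite /mu_comb mulmx_sumr mulmx_suml; apply: eq_bigr => k _.
by rewrite -scalemxAr -scalemxAl diag_scale_mu // scalerA mulrA.
Qed.

End DiagonalScaling.

Lemma exists_pos_root (R : rcfType) p (a : R) : (0 < p)%N -> 0 < a -> exists x, x ^+ p = a.
Proof.
move=> p_gt0 a_gt0.
have [||x _ /rootP] := @poly_ivt R ('X^p - a%:P) 0 (1 + a).
- by rewrite addr_ge0 ?ltW.
- rewrite !hornerE expr0n (negbTE (lt0n_neq0 p_gt0)) sub0r oppr_le0 ltW //=.
  rewrite subr_ge0 (le_trans _ (@ler_eXnr _ (1 + a) p p_gt0 _)) ?lerDr ?lerDl ?ltW //.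
by rewrite !hornerE => /eqP; rewrite subr_eq0 => /eqP; exists x.
Qed.

Section ReducedForm.
Variables (R : numFieldType) (n : nat) (c : nat -> R).
Hypotheses (n_gt1 : (1 < n)%N) (c_red : reduced_upto n n c).
Local Notation k0 := ((n - 1) %/ 3)%N.

Lemma reduced_coef k : (k < n)%N ->
  c k = (k == 0%N)%:R + c k0 *+ ((k == k0) && (n %% 3 == 1)%N).
Proof.
case: c_red => c0 cK lt_kn; have [->|k_gt0] := posnP k.
  by rewrite c0 (_ : (_ && _) = false) ?addr0 //; apply/negbTE; lia.
have [k3|k3] := eqVneq (3 * k + 1)%N n.
  by rewrite (_ : (_ && _) = true) ?add0r ?mulr1n; [congr c; lia | lia].
by rewrite cK ?k_gt0 // (_ : (_ && _) = false) ?addr0 ?mulr0n //; apply/negbTE; lia.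
Qed.

Lemma reduced_mu_combE v :
  mu_comb n c v = mu n 0 v + (c k0 *+ (n %% 3 == 1)%N) *: mu n k0 v.
Proof.
rewrite /mu_comb (eq_big_nat _ _ (fun k lt_k => congr1 (fun a => a *: mu n k v)
  (reduced_coef (proj2 (andP lt_k))))).
under eq_bigr => k _ do rewrite scalerDl scaler_nat.
rewrite big_split /= sum_mu_delta; congr (_ + _).
case: (n %% 3 == 1)%N; last by rewrite mulr0n scale0r big1 // => k _; rewrite andbF scale0r.
under eq_bigr => k _ do rewrite andbT -scalerMnl scalerMnr.
by rewrite -scaler_sumr sum_mu_delta mulr1n.
Qed.

End ReducedForm.

Lemma mu_comb_normal_form (R : rcfType) n (c : nat -> R) : (1 < n)%N -> c 0%N != 0 ->
  exists A c', [/\ g_orthogonal A, brings A (mu_comb n c) (mu_comb n c') & reduced_upto n n c'].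
Proof.
move=> n_gt1 c0_neq0; have n1_gt0 : (0 < n.-1)%N by lia.
have [lam lam_pow] : exists lam : R, lam ^+ n.-1 = c 0%N ^+ 2.
  by apply: exists_pos_root; rewrite ?exprn_even_gt0 //= c0_neq0.
have lam_neq0 : lam != 0.
  apply: contra c0_neq0 => /eqP lam0.
  by rewrite -sqrf_eq0 -lam_pow lam0 expr0n (negbTE (lt0n_neq0 n1_gt0)).
pose nu := (c 0%N)^-1.
have [|A [c' [oA bA red]]] := @reduce_mu_comb R n n (fun k => c k * nu / lam ^+ k) (leqnn n).
  by rewrite expr0 divr1 mulfV.
exists (A *m diag_scale n nu lam), c'; split=> //.
- apply: g_orthogonal_mul oA; apply: diag_scale_orthogonal.
  by rewrite lam_pow -exprMn mulVf // expr1n.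
- by apply: brings_mul bA; apply: diag_scale_brings.
Qed.

Theorem proposition4 (R : realType) (n : nat) (xi : nat -> R) :
  (2 <= n)%N -> xi 0%N != 0 ->
  let S0 := fun u : 'cV[R]_n => \sum_(0 <= i < n.-1) xi i *: mu n i u in
  ((n %% 3 != 1)%N ->
     exists A : 'M[R]_n, g_orthogonal A /\ brings A S0 (mu n 0)) /\
  ((n %% 3 == 1)%N -> n != 4%N ->
     exists (A : 'M[R]_n) (kappa : R), g_orthogonal A /\
       brings A S0 (fun u => mu n 0 u + kappa *: mu n ((n - 1) %/ 3) u)).
Proof.
move=> n_gt1 xi0 S0.
have [A [c [oA bA red]]] := mu_comb_normal_form n_gt1 xi0.
have bS0 : brings A S0 (mu_comb n c) by move=> u; rewrite /S0 mu_comb_predn bA.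
split=> [n3|n3 _].
  exists A; split=> // u.
  by rewrite bS0 (reduced_mu_combE n_gt1 red) (negbTE n3) mulr0n scale0r addr0.
exists A, (c ((n - 1) %/ 3)%N); split=> // u.
by rewrite bS0 (reduced_mu_combE n_gt1 red) n3 mulr1n.
Qed.
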